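(* Let $n\ge0$, let $P_k=s_k\vec e_k\in\mathbb{R}^{n+1}$ for $0\le k\le n$, and let $Q=(i_0,\dots,i_n)\in\mathbb{Z}^{n+1}$ with $0\le i_k\le s_k-1$ for all $k$ and $\sum_{k=0}^nd_{n,k}i_k<d_n$. Let $0\le j\le n$ be an index with $i_j\ne0$, and let $w(x_0,\dots,x_n)=\sum_{k=0}^nw_kx_k$ be a linear function with $w(Q)=d_n$ and $w(P_k)=d_n$ for all $k\ne j$. Then (1) $\sum_{k=0}^nw_k\ge d_n$; and (2) if $\sum_{k=0}^nw_k=d_n$, then $\sum_{k=0}^{n-1}d_{n-1,k}i_k+i_n=d_{n-1}$.
   Context: Sylvester numbers: $s_0=2$, $s_{k+1}=1+\prod_{i=0}^ks_i$. For $m\ge0$, $d_m=\prod_{k=0}^ms_k$ and $d_{m,k}=d_m/s_k$. $\vec e_0,\dots,\vec e_n$ is the standard basis of $\mathbb{R}^{n+1}$. *)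

From HB Require Import structures.
From mathcomp Require Import all_boot all_order all_algebra.
From mathcomp Require Import zify.
Set Implicit Arguments. Unset Strict Implicit. Unset Printing Implicit Defensive.
Import Order.TTheory GRing.Theory Num.Theory.

(* Auxiliary: sylv_pre m = s_0 * ... * s_m, computed by the recursion
   s_{m+1} = 1 + s_0...s_m, hence prod_{0..m+1} = prod_{0..m} * (prod_{0..m} + 1). *)
Fixpoint sylv_pre (m : nat) : nat :=
  match m with
  | 0 => 2
  | m'.+1 => sylv_pre m' * (sylv_pre m' + 1)
  end.

Definition sylv (k : nat) : nat :=
  match k with
  | 0 => 2
  | k'.+1 => (sylv_pre k').+1
  end.

(* dprod m = prod_{k < m} s_k ; so the paper's d_m is dprod m.+1, and
   dprod 0 = 1 (empty product, convention for d_{-1}). *)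
Definition dprod (m : nat) : nat := \prod_(k < m) sylv k.

(* d_{m,k} in paper = d_m / s_k, i.e. dprodk m.+1 k *)
Definition dprodk (m k : nat) : nat := dprod m %/ sylv k.

Lemma sylv_pre_dprod m : sylv_pre m = dprod m.+1.
Proof.
elim: m => [|m IH]; first by rewrite /dprod big_ord1.
by rewrite /dprod big_ord_recr /= -/(dprod m.+1) -IH addn1.
Qed.

Lemma sylv0 : sylv 0 = 2. Proof. by []. Qed.
Lemma sylvS k : sylv k.+1 = 1 + \prod_(i < k.+1) sylv i.
Proof. by rewrite /= sylv_pre_dprod add1n. Qed.

From HB Require Import structures.
From mathcomp Require Import all_boot all_order all_algebra.
From mathcomp Require Import zify ring lra.
Import Order.TTheory GRing.Theory Num.Theory.
Set Implicit Arguments. Unset Strict Implicit.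

(* Write c_k = d_{n,k} and D = d_n.  Since w_k = c_k for k <> j, both w(Q) and
   the sum of the w_k differ from their values at c by a multiple of
   u = w_j - c_j, and u i_j = E := D - sum_k c_k i_k > 0.  Every c_k with
   k <> j is divisible by s_j while c_j = -1 mod s_j, so E = i_j mod s_j; as
   0 < i_j < s_j this forces E >= i_j, i.e. u >= 1, which is (1).  Equality
   means E = i_j; splitting off the factor s_n = d_{n-1} + 1 from the c_k
   turns this into a representation of d_{n-1} s_n - i_j in the mixed radix
   (s_n, d_{n-1}), whose digits are then forced, which is (2). *)

Lemma sylvE m : sylv m = (dprod m).+1.
Proof.
case: m => [|m]; first by rewrite /dprod big_ord0.
by rewrite /= sylv_pre_dprod.
Qed.

Lemma dprodS m : dprod m.+1 = dprod m * sylv m.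
Proof. by rewrite /dprod big_ord_recr. Qed.

Lemma dprod_gt0 m : 0 < dprod m.
Proof. by rewrite /dprod prodn_gt0 // => k; rewrite sylvE. Qed.

Lemma sylv_gt1 k : 1 < sylv k.
Proof. by rewrite sylvE ltnS dprod_gt0. Qed.

Lemma dprodkE m (k : 'I_m) : dprodk m k = \prod_(i < m | i != k) sylv i.
Proof. by rewrite /dprodk /dprod (bigD1 k) //= mulKn // ltnW // sylv_gt1. Qed.

Lemma dprodkK m (k : 'I_m) : dprodk m k * sylv k = dprod m.
Proof. by rewrite dprodkE mulnC /dprod [in RHS](bigD1 k). Qed.

Lemma dvdn_sylv_dprodk m (k l : 'I_m) : l != k -> sylv l %| dprodk m k.
Proof. by move=> lk; rewrite dprodkE (bigD1 l) //= dvdn_mulr. Qed.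

Lemma dvdn_sylv_dprod m (k : 'I_m) : sylv k %| dprod m.
Proof. by rewrite -(dprodkK k) dvdn_mull. Qed.

Lemma leq_sylv : {homo sylv : k m / k <= m}.
Proof.
move=> k m; rewrite leq_eqVlt => /orP[/eqP -> // | km].
by rewrite (sylvE m) ltnW // ltnS dvdn_leq ?dprod_gt0 // (dvdn_sylv_dprod (Ordinal km)).
Qed.

Lemma dprodkS n k : k < n -> dprodk n.+1 k = dprodk n k * sylv n.
Proof.
by move=> kn; rewrite /dprodk dprodS divn_mulAC // (dvdn_sylv_dprod (Ordinal kn)).
Qed.

Lemma dprodk_max n : dprodk n.+1 (@ord_max n) = dprod n.
Proof. by rewrite /dprodk dprodS mulnK // ltnW // sylv_gt1. Qed.

(* The Sylvester identity sum_k 1/s_k + 1/d_{m-1} = 1, cleared of denominators. *)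
Lemma sum_dprodk m : \sum_(k < m) dprodk m k + 1 = dprod m.
Proof.
elim: m => [|m IHm]; first by rewrite big_ord0 /dprod big_ord0.
rewrite big_ord_recr /= dprodk_max.
rewrite (eq_bigr (fun k : 'I_m => dprodk m k * sylv m)); last first.
  by move=> k _; rewrite dprodkS.
by rewrite -big_distrl /= dprodS sylvE -IHm; set S := \sum_(_ < m) _; lia.
Qed.

Lemma dvdn_sylv_dprodk_add1 m (k : 'I_m) : sylv k %| dprodk m k + 1.
Proof.
have := dvdn_sylv_dprod k; rewrite -sum_dprodk (bigD1 k) //= addnAC dvdn_addl //.
by apply: dvdn_sum => l lk; rewrite dvdn_sylv_dprodk // eq_sym.
Qed.

Local Open Scope ring_scope.

Definition wsum m (i : 'I_m -> int) : int := \sum_(k < m) (dprodk m k)%:Z * i k.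

Lemma dvdz_dprod_sub_wsum m (i : 'I_m -> int) (j : 'I_m) :
  ((sylv j)%:Z %| (dprod m)%:Z - wsum i - i j)%Z.
Proof.
have -> : (dprod m)%:Z - wsum i - i j = (dprod m)%:Z - (dprodk m j + 1)%N%:Z * i j
    - \sum_(k < m | k != j) (dprodk m k)%:Z * i k.
  by rewrite /wsum (bigD1 j) //= PoszD; ring.
rewrite rpredB ?rpredB ?dvdz_mulr ?rpred_sum //; first exact: dvdn_sylv_dprod.
  exact: dvdn_sylv_dprodk_add1.
by move=> k kj; rewrite dvdz_mulr // dvdzE !absz_nat dvdn_sylv_dprodk // eq_sym.
Qed.

Lemma ge_of_dvdz_sub (s e b : int) : 0 < e -> b < s -> (s %| e - b)%Z -> b <= e.
Proof. by move=> e_gt0 bs /dvdzP[q eq]; have [q_ge0 | q_lt0] := lerP 0 q; nia. Qed.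

Lemma mixed_radix_eq (d t a b : int) :
  0 <= a <= d -> 0 < b <= d -> (d + 1) * t + d * a + b = d * (d + 1) -> t + a = d.
Proof.
move=> /andP[a_ge0 a_le] /andP[b_gt0 b_le] eq.
have digit : (d + 1) * (d - t - a) + a = b by lia.
have [X_gt0 | X_le0] := ltrP 0 (d - t - a); first nia.
have [X_lt0 | X_ge0] := ltrP (d - t - a) 0; first nia.
lia.
Qed.

Lemma wsumS n (i : 'I_n.+1 -> int) :
  wsum i = (sylv n)%:Z * \sum_(k < n.+1 | (k < n)%N) (dprodk n k)%:Z * i k
           + (dprod n)%:Z * i ord_max.
Proof.
have lt_max (k : 'I_n.+1) : (k < n)%N = (k != ord_max).
  by rewrite -val_eqE /= ltn_neqAle -ltnS ltn_ord andbT.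
rewrite /wsum (bigD1 ord_max) //= addrC dprodk_max mulr_sumr; congr (_ + _).
apply: eq_big => [k | k kn]; first by rewrite lt_max.
by rewrite dprodkS ?lt_max // PoszM; ring.
Qed.

Lemma wsum_add_eq_dprod n (i : 'I_n.+1 -> int) (b : int) :
  0 <= i ord_max <= (dprod n)%:Z -> 0 < b <= (dprod n)%:Z ->
  wsum i + b = (dprod n.+1)%:Z ->
  \sum_(k < n.+1 | (k < n)%N) (dprodk n k)%:Z * i k + i ord_max = (dprod n)%:Z.
Proof.
move=> ia b_bd; rewrite wsumS dprodS sylvE !PoszM intS => eq.
by apply: mixed_radix_eq ia b_bd _; lia.
Qed.

Lemma sumr_eq_except1 (V : zmodType) m (F G : 'I_m -> V) (j : 'I_m) :
  (forall k, k != j -> F k = G k) ->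
  \sum_(k < m) F k = \sum_(k < m) G k + (F j - G j).
Proof.
move=> FG; rewrite (bigD1 j) // [in RHS](bigD1 j) //= (eq_bigr _ FG).
by rewrite [RHS]addrC addrA subrK.
Qed.

Theorem lemma5p1 (R : realFieldType) (n : nat)
    (i : 'I_n.+1 -> int) (j : 'I_n.+1) (w : 'I_n.+1 -> R) :
  (forall k : 'I_n.+1, 0 <= i k /\ i k <= (sylv k)%:Z - 1) ->
  \sum_(k < n.+1) (dprodk n.+1 k)%:Z * i k < (dprod n.+1)%:Z ->
  i j != 0 ->
  \sum_(k < n.+1) w k * (i k)%:~R = (dprod n.+1)%:R ->
  (forall k : 'I_n.+1, k != j -> w k * (sylv k)%:R = (dprod n.+1)%:R) ->
  (dprod n.+1)%:R <= \sum_(k < n.+1) w k /\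
  (\sum_(k < n.+1) w k = (dprod n.+1)%:R ->
     \sum_(k < n.+1 | (k < n)%N) (dprodk n k)%:Z * i k + i ord_max = (dprod n)%:Z).
Proof.
move=> i_bd wsum_lt ij_neq0 wQ wP.
pose c k : R := (dprodk n.+1 k)%:R.
pose E := (dprod n.+1)%:Z - wsum i.
have wc k : k != j -> w k = c k.
  move=> /wP; rewrite -(dprodkK k) natrM => /mulIf; apply.
  by rewrite pnatr_eq0 -lt0n ltnW // sylv_gt1.
have [ij_ge0 ij_le] := i_bd j.
have ij_gt0 : 0 < i j by rewrite lt0r ij_neq0.
have E_ge : i j <= E.
  by apply: ge_of_dvdz_sub (dvdz_dprod_sub_wsum i j); rewrite ?subr_gt0 //; lia.
have uE : (w j - c j) * (i j)%:~R = E%:~R.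
  have wsumR : (wsum i)%:~R = \sum_(k < n.+1) c k * (i k)%:~R :> R.
    by rewrite rmorph_sum; apply: eq_bigr => k _; rewrite rmorphM /= -pmulrn.
  rewrite /E rmorphB /= -pmulrn wsumR -wQ.
  by rewrite (@sumr_eq_except1 _ _ _ (fun k => c k * (i k)%:~R) j) => [|k /wc ->]; first ring.
have sumw : \sum_(k < n.+1) w k = (dprod n.+1)%:R - 1 + (w j - c j).
  by rewrite (sumr_eq_except1 wc) -(sum_dprodk n.+1) natrD addrK natr_sum.
have ijR : 0 < (i j)%:~R :> R by rewrite ltr0z.
have E_geR : (i j)%:~R <= E%:~R :> R by rewrite ler_int.
split=> [|sumw_eq]; first by rewrite sumw; nra.
have E_eq : E = i j.
  by apply: (@intr_inj R); rewrite -uE (_ : w j - c j = 1) ?mul1r //; lra.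
apply: (wsum_add_eq_dprod (b := i j)); last by rewrite -E_eq /E; ring.
  by have [] := i_bd ord_max; rewrite /= sylvE; lia.
have := leq_sylv (ltnSE (ltn_ord j)); rewrite -lez_nat (sylvE n) ij_gt0 /=; lia.
Qed.
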